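(* Let $a\ge0$ and $\mathfrak g=\mathfrak r'_{3,a}$ (basis $\{e_1,e_2,e_3\}$, nonzero brackets $[e_1,e_2]=ae_2-e_3$, $[e_1,e_3]=e_2+ae_3$), and let $\langle\cdot,\cdot\rangle_0$ be the inner product for which $\{e_1,e_2,e_3\}$ is orthonormal. An inner product $\langle\cdot,\cdot\rangle$ on $\mathfrak g$ is a solvsoliton if and only if $[\langle\cdot,\cdot\rangle]=[\langle\cdot,\cdot\rangle_0]$. Moreover, $\langle\cdot,\cdot\rangle_0$ is Einstein.
   Context: An inner product on a solvable Lie algebra $\mathfrak g$ is a solvsoliton if its Ricci operator satisfies $\mathrm{Ric}=cI+D$ for some $c\in\mathbb R$ and $D\in\mathrm{Der}(\mathfrak g)$ (Ricci operator of the metric Lie algebra defined via $2\langle\nabla_XY,Z\rangle=\langle[Z,X],Y\rangle+\langle X,[Z,Y]\rangle+\langle[X,Y],Z\rangle$, $R(X,Y)=[\nabla_X,\nabla_Y]-\nabla_{[X,Y]}$, $\mathrm{Ric}(X)=\sum_iR(X,e_i)e_i$ for an orthonormal basis); it is Einstein if $\mathrm{Ric}=cI$. Two inner products are isometric up to scaling if $\langle\cdot,\cdot\rangle_1=k\langle f\cdot,f\cdot\rangle_2$ for some $k>0$ and Lie algebra automorphism $f$ of $\mathfrak g$; $[\langle\cdot,\cdot\rangle]$ denotes the equivalence class. *)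

From HB Require Import structures.
From mathcomp Require Import all_boot all_order all_algebra.
From mathcomp Require Import reals.
Set Implicit Arguments. Unset Strict Implicit. Unset Printing Implicit Defensive.
Import Order.TTheory GRing.Theory Num.Theory.
Local Open Scope ring_scope.

Section MetricLie.
Variable R : realType.
Notation vec := 'cV[R]_3.

(* standard basis vector e_k (k : 'I_3; e_1,e_2,e_3 of the paper are k = 0,1,2) *)
Definition ebasis (k : 'I_3) : vec := delta_mx k 0.

Definition ip (G : 'M[R]_3) (x y : vec) : R := (x^T *m G *m y) 0 0.

Definition inner_product (G : 'M[R]_3) : Prop :=
  G^T = G /\ forall x : vec, x != 0 -> 0 < ip G x x.

(* The Lie algebra r'_{3,a}:  [e1,e2] = a e2 - e3, [e1,e3] = e2 + a e3,
   [e2,e3] = 0, extended bilinearly and skew-symmetrically. *)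
Definition br_r3a (a : R) (x y : vec) : vec :=
  let p := x 0 0 * y 1 0 - x 1 0 * y 0 0 in   (* coefficient of e1 /\ e2 *)
  let q := x 0 0 * y 2 0 - x 2 0 * y 0 0 in   (* coefficient of e1 /\ e3 *)
  \col_(i < 3) [:: 0; a * p + q; - p + a * q]`_i.

Variable br : vec -> vec -> vec.

(* Levi-Civita connection via the Koszul formula:
   nabla_X Y is the unique vector with
   2<nabla_X Y, Z> = <[Z,X],Y> + <X,[Z,Y]> + <[X,Y],Z> for all Z;
   we solve it on the basis Z = e_k using the inverse Gram matrix. *)
Definition nabla (G : 'M[R]_3) (X Y : vec) : vec :=
  invmx G *m \col_(k < 3)
    ((ip G (br (ebasis k) X) Y + ip G X (br (ebasis k) Y)
      + ip G (br X Y) (ebasis k)) / 2).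

Definition curv (G : 'M[R]_3) (X Y Z : vec) : vec :=
  nabla G X (nabla G Y Z) - nabla G Y (nabla G X Z) - nabla G (br X Y) Z.

Definition orthonormal_basis (G : 'M[R]_3) (U : 'M[R]_3) : Prop :=
  U^T *m G *m U = 1%:M.

Definition ricci_wrt (G U : 'M[R]_3) (X : vec) : vec :=
  \sum_(i < 3) curv G X (col i U) (col i U).

Definition derivation (D : 'M[R]_3) : Prop :=
  forall x y : vec, D *m br x y = br (D *m x) y + br x (D *m y).

Definition automorphism (f : 'M[R]_3) : Prop :=
  f \in unitmx /\ forall x y : vec, f *m br x y = br (f *m x) (f *m y).

(* Ric = c I + D with D a derivation (the Ricci operator being computed in any
   orthonormal basis; it does not depend on the choice). *)
Definition solvsoliton (G : 'M[R]_3) : Prop :=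
  exists (c : R) (D : 'M[R]_3), derivation D /\
    forall U, orthonormal_basis G U ->
      forall X : vec, ricci_wrt G U X = c *: X + D *m X.

Definition einstein (G : 'M[R]_3) : Prop :=
  exists c : R, forall U, orthonormal_basis G U ->
      forall X : vec, ricci_wrt G U X = c *: X.

Definition iso_up_to_scaling (G1 G2 : 'M[R]_3) : Prop :=
  exists (k : R) (f : 'M[R]_3), 0 < k /\ automorphism f /\
    forall x y : vec, ip G1 x y = k * ip G2 (f *m x) (f *m y).

End MetricLie.

(* A shear e0 |-> e0 + v1 e1 + v2 e2 is an automorphism of r'_{3,a}; choosing it so
   that e0 becomes orthogonal to the ideal span(e1, e2) shows that every inner product
   is, up to isometry and scaling, a block metric diag(1, M) with M = [[p, r], [r, q]]
   positive definite.  The Ricci operator does not depend on the orthonormal frame (it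
   is X |-> sum_jk (G^-1)_jk R(X, e_j) e_k), it is conjugated by automorphisms and
   divided by k when the metric is multiplied by k; hence being a solvsoliton is
   invariant under both.  Every derivation D of r'_{3,a} satisfies D11 = D22 and D21 = -D12,
   so Ric = cI + D forces p^2 - q^2 + 2ar(p + q) = 0 = 2r(p + q) - a(p^2 - q^2), i.e.
   p = q and r = 0.  The metric diag(1, p, p) is the pull-back of the standard one by
   the automorphism diag(1, sqrt p, sqrt p), and the standard metric is Einstein with
   Ric = -2a^2 I. *)

From HB Require Import structures.
From mathcomp Require Import all_boot all_order all_algebra.
From mathcomp Require Import reals.
From mathcomp Require Import ring lra.
Import Order.TTheory GRing.Theory Num.Theory.
Local Open Scope ring_scope.
Set Implicit Arguments. Unset Strict Implicit. Unset Printing Implicit Defensive.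

Ltac case_ord3 i := let Hi := fresh in case: i => [[|[|[|?]]] Hi] //.

Section Coordinates.
Variable R : realType.
Notation vec := 'cV[R]_3.
Notation e := (ebasis R).

Definition vec3 (x y z : R) : vec := \col_(i < 3) [:: x; y; z]`_i.

Definition mat3 (a00 a01 a02 a10 a11 a12 a20 a21 a22 : R) : 'M[R]_3 :=
  \matrix_(i < 3, j < 3)
    nth 0 (nth [::] [:: [:: a00; a01; a02]; [:: a10; a11; a12]; [:: a20; a21; a22]] i) j.

Lemma vec3E x y z : (vec3 x y z 0 0 = x) * (vec3 x y z 1 0 = y) * (vec3 x y z 2 0 = z).
Proof. by rewrite !mxE. Qed.

Lemma ord3_cases (i : 'I_3) : [\/ i = 0, i = 1 | i = 2].
Proof. by case_ord3 i; [constructor 1 | constructor 2 | constructor 3]; apply/val_inj. Qed.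

Lemma sum3 (V : nmodType) (F : 'I_3 -> V) : \sum_i F i = F 0 + F 1 + F 2.
Proof. by rewrite !big_ord_recr big_ord0 /= add0r; congr (F _ + F _ + F _); apply/val_inj. Qed.

Lemma col3 (f : 'I_3 -> R) : \col_i f i = vec3 (f 0) (f 1) (f 2).
Proof. by apply/matrixP => i j; rewrite !mxE; case_ord3 i; congr f; apply/val_inj. Qed.

Lemma vec3_eta (X : vec) : X = vec3 (X 0 0) (X 1 0) (X 2 0).
Proof.
apply/matrixP => i j; rewrite (ord1 j) mxE.
by case_ord3 i; congr (X _ _); apply/val_inj.
Qed.

Lemma vec3_eq x y z x' y' z' : x = x' -> y = y' -> z = z' -> vec3 x y z = vec3 x' y' z'.
Proof. by move=> -> -> ->. Qed.

Lemma vec3D x y z x' y' z' : vec3 x y z + vec3 x' y' z' = vec3 (x + x') (y + y') (z + z').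
Proof. by apply/matrixP => i j; rewrite !mxE; case_ord3 i. Qed.

Lemma vec3B x y z x' y' z' : vec3 x y z - vec3 x' y' z' = vec3 (x - x') (y - y') (z - z').
Proof. by apply/matrixP => i j; rewrite !mxE; case_ord3 i. Qed.

Lemma vec3Z k x y z : k *: vec3 x y z = vec3 (k * x) (k * y) (k * z).
Proof. by apply/matrixP => i j; rewrite !mxE; case_ord3 i. Qed.

Lemma vec3_ebasis x y z : vec3 x y z = x *: e 0 + y *: e 1 + z *: e 2.
Proof.
apply/matrixP => i j; rewrite (ord1 j) !mxE.
by case_ord3 i; rewrite /= ?mulr0 ?mulr1 ?addr0 ?add0r.
Qed.

Lemma ebasisE : (e 0 = vec3 1 0 0) * (e 1 = vec3 0 1 0) * (e 2 = vec3 0 0 1).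
Proof.
by split; [split|]; apply/matrixP => i j; rewrite (ord1 j) !mxE; case_ord3 i.
Qed.

Lemma vec3_inj x y z x' y' z' :
  vec3 x y z = vec3 x' y' z' -> (x = x') * (y = y') * (z = z').
Proof.
move=> h; have := congr1 (fun X : vec => (X 0 0, X 1 0, X 2 0)) h.
by rewrite !mxE => -[-> -> ->].
Qed.

Lemma vec3_neq0 x y z : (x != 0) || (y != 0) || (z != 0) -> vec3 x y z != 0.
Proof.
apply: contraTneq => /(congr1 (fun X : vec => (X 0 0, X 1 0, X 2 0))).
by rewrite !mxE => -[-> -> ->]; rewrite eqxx.
Qed.

Lemma mat3_eta (M : 'M[R]_3) :
  M = mat3 (M 0 0) (M 0 1) (M 0 2) (M 1 0) (M 1 1) (M 1 2) (M 2 0) (M 2 1) (M 2 2).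
Proof.
apply/matrixP => i j; rewrite mxE.
by case_ord3 i; case_ord3 j; congr (M _ _); apply/val_inj.
Qed.

Lemma mat3E a00 a01 a02 a10 a11 a12 a20 a21 a22 :
  let M := mat3 a00 a01 a02 a10 a11 a12 a20 a21 a22 in
  (M 0 0 = a00) * (M 0 1 = a01) * (M 0 2 = a02) * (M 1 0 = a10) * (M 1 1 = a11) *
  (M 1 2 = a12) * (M 2 0 = a20) * (M 2 1 = a21) * (M 2 2 = a22).
Proof. by rewrite /= !mxE. Qed.

Lemma mulmx3 m n (A : 'M[R]_(m, 3)) (B : 'M[R]_(3, n)) i j :
  (A *m B) i j = A i 0 * B 0 j + A i 1 * B 1 j + A i 2 * B 2 j.
Proof.
rewrite mxE !big_ord_recr big_ord0 /= add0r.
by congr (A i _ * B _ j + A i _ * B _ j + A i _ * B _ j); apply/val_inj.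
Qed.

Lemma mat3_mul a00 a01 a02 a10 a11 a12 a20 a21 a22
                b00 b01 b02 b10 b11 b12 b20 b21 b22 :
  mat3 a00 a01 a02 a10 a11 a12 a20 a21 a22 *m mat3 b00 b01 b02 b10 b11 b12 b20 b21 b22 =
  mat3 (a00*b00 + a01*b10 + a02*b20) (a00*b01 + a01*b11 + a02*b21) (a00*b02 + a01*b12 + a02*b22)
       (a10*b00 + a11*b10 + a12*b20) (a10*b01 + a11*b11 + a12*b21) (a10*b02 + a11*b12 + a12*b22)
       (a20*b00 + a21*b10 + a22*b20) (a20*b01 + a21*b11 + a22*b21) (a20*b02 + a21*b12 + a22*b22).
Proof. by apply/matrixP => i j; rewrite mulmx3 !mxE; case_ord3 i; case_ord3 j. Qed.

Lemma mat3_mulv a00 a01 a02 a10 a11 a12 a20 a21 a22 x y z :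
  mat3 a00 a01 a02 a10 a11 a12 a20 a21 a22 *m vec3 x y z =
  vec3 (a00*x + a01*y + a02*z) (a10*x + a11*y + a12*z) (a20*x + a21*y + a22*z).
Proof. by apply/matrixP => i j; rewrite (ord1 j) mulmx3 !mxE; case_ord3 i. Qed.

Lemma mat3_tr a00 a01 a02 a10 a11 a12 a20 a21 a22 :
  (mat3 a00 a01 a02 a10 a11 a12 a20 a21 a22)^T = mat3 a00 a10 a20 a01 a11 a21 a02 a12 a22.
Proof. by apply/matrixP => i j; rewrite !mxE; case_ord3 i; case_ord3 j. Qed.

Lemma mat3Z k a00 a01 a02 a10 a11 a12 a20 a21 a22 :
  k *: mat3 a00 a01 a02 a10 a11 a12 a20 a21 a22
  = mat3 (k*a00) (k*a01) (k*a02) (k*a10) (k*a11) (k*a12) (k*a20) (k*a21) (k*a22).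
Proof. by apply/matrixP => i j; rewrite !mxE; case_ord3 i; case_ord3 j. Qed.

Lemma mat3_1 : 1%:M = mat3 1 0 0 0 1 0 0 0 1 :> 'M[R]_3.
Proof. by apply/matrixP => i j; rewrite !mxE; case_ord3 i; case_ord3 j. Qed.

Lemma ip3 (G : 'M[R]_3) (x y : vec) : ip G x y =
  x 0 0 * (G 0 0 * y 0 0 + G 0 1 * y 1 0 + G 0 2 * y 2 0) +
  x 1 0 * (G 1 0 * y 0 0 + G 1 1 * y 1 0 + G 1 2 * y 2 0) +
  x 2 0 * (G 2 0 * y 0 0 + G 2 1 * y 1 0 + G 2 2 * y 2 0).
Proof. rewrite /ip !mulmx3 !mxE; ring. Qed.

End Coordinates.

Section InnerProducts.
Variable R : realType.
Notation vec := 'cV[R]_3.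
Notation e := (ebasis R).
Implicit Types (G f U : 'M[R]_3) (x y z : vec) (c k : R).

Lemma sqr_exists (x : R) : 0 < x -> exists2 s : R, s != 0 & x = s ^+ 2.
Proof.
move=> x_gt0; exists (Num.sqrt x); first by rewrite lt0r_neq0 // sqrtr_gt0.
by rewrite sqr_sqrtr // ltW.
Qed.

Lemma invmx_eq n (A B : 'M[R]_n) : A *m B = 1%:M -> invmx A = B.
Proof.
move=> AB; have [uA _] := mulmx1_unit AB.
by rewrite -[RHS](mulKmx uA) AB mulmx1.
Qed.

Lemma invmxM n (A B : 'M[R]_n) : A \in unitmx -> B \in unitmx ->
  invmx (A *m B) = invmx B *m invmx A.
Proof.
by move=> uA uB; apply: invmx_eq; rewrite -mulmxA (mulmxA B) mulmxV // mul1mx mulmxV.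
Qed.

Lemma vec_ebasis x : x = \sum_i x i 0 *: e i.
Proof. by rewrite {1}[x]matrix_sum_delta; apply: eq_bigr => i _; rewrite big_ord1. Qed.

Lemma mulmx_ebasis f i : f *m e i = \sum_j f j i *: e j.
Proof. by rewrite {1}[f *m e i]vec_ebasis; apply: eq_bigr => j _; rewrite -colE mxE. Qed.

Lemma ipDl G x y z : ip G (x + y) z = ip G x z + ip G y z.
Proof. by rewrite /ip linearD /= !mulmxDl mxE. Qed.
Lemma ipZl G c x z : ip G (c *: x) z = c * ip G x z.
Proof. by rewrite /ip linearZ /= -!scalemxAl mxE. Qed.
Lemma ipDr G x y z : ip G z (x + y) = ip G z x + ip G z y.
Proof. by rewrite /ip mulmxDr mxE. Qed.
Lemma ipZr G c x z : ip G z (c *: x) = c * ip G z x.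
Proof. by rewrite /ip -scalemxAr mxE. Qed.

Lemma ip_scale k G x y : ip (k *: G) x y = k * ip G x y.
Proof. by rewrite /ip -scalemxAr -scalemxAl mxE. Qed.

Lemma ip_mulmx f G x y : ip (f^T *m G *m f) x y = ip G (f *m x) (f *m y).
Proof. by rewrite /ip trmx_mul !mulmxA. Qed.

Lemma ip_ebasis G i j : ip G (e i) (e j) = G i j.
Proof. by rewrite /ip /ebasis trmx_delta -rowE -colE !mxE. Qed.

Lemma ip_inj G G' : (forall x y, ip G x y = ip G' x y) -> G = G'.
Proof. by move=> hG; apply/matrixP => i j; rewrite -!ip_ebasis. Qed.

Record is_bilinear (C : vec -> vec -> vec) : Prop := IsBilinear {
  bilinDl : forall x y z, C (x + y) z = C x z + C y z;
  bilinZl : forall c x z, C (c *: x) z = c *: C x z;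
  bilinDr : forall x y z, C z (x + y) = C z x + C z y;
  bilinZr : forall c x z, C z (c *: x) = c *: C z x }.

Section BilinearSums.
Variable C : vec -> vec -> vec.
Hypothesis C_bilinear : is_bilinear C.
Let CDl := bilinDl C_bilinear.
Let CZl := bilinZl C_bilinear.
Let CDr := bilinDr C_bilinear.
Let CZr := bilinZr C_bilinear.

Lemma bilinear_expand x y :
  C x y = \sum_l \sum_m (x l 0 * y m 0) *: C (e l) (e m).
Proof.
have C0l z : C 0 z = 0 by rewrite -(scale0r (0 : vec)) CZl !scale0r.
have C0r z : C z 0 = 0 by rewrite -(scale0r (0 : vec)) CZr !scale0r.
rewrite {1}[x]vec_ebasis (big_morph (C^~ y) (fun u v => CDl u v y) (C0l y)).
apply: eq_bigr => l _; rewrite CZl {1}[y]vec_ebasis.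
rewrite (big_morph (C (e l)) (fun u v => CDr u v (e l)) (C0r (e l))) scaler_sumr.
by apply: eq_bigr => m _; rewrite CZr scalerA.
Qed.

Lemma bilinear_sum_conj f M :
  \sum_j \sum_k (f *m M *m f^T) j k *: C (e j) (e k)
  = \sum_j \sum_k M j k *: C (f *m e j) (f *m e k).
Proof.
pose F (j k l m : 'I_3) := (f l j * M j k * f m k) *: C (e l) (e m).
transitivity (\sum_l \sum_m \sum_j \sum_k F j k l m).
  apply: eq_bigr => l _; apply: eq_bigr => m _.
  rewrite mxE scaler_suml exchange_big; apply: eq_bigr => k _.
  by rewrite !mxE big_distrl scaler_suml; apply: eq_bigr.
transitivity (\sum_j \sum_k \sum_l \sum_m F j k l m).
  rewrite pair_big [RHS]pair_big.
  under eq_bigr do rewrite pair_big.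
  under [RHS]eq_bigr do rewrite pair_big.
  by rewrite exchange_big.
apply: eq_bigr => j _; apply: eq_bigr => k _.
rewrite (bilinear_expand (f *m e j)) scaler_sumr; apply: eq_bigr => l _.
rewrite scaler_sumr; apply: eq_bigr => m _.
by rewrite scalerA /F /ebasis -!colE !mxE; congr (_ *: _); ring.
Qed.

Lemma bilinear_sum_frame U :
  \sum_i C (col i U) (col i U) = \sum_j \sum_k (U *m U^T) j k *: C (e j) (e k).
Proof.
rewrite -[U *m U^T](congr1 (mulmx^~ U^T) (mulmx1 U)) bilinear_sum_conj.
apply: eq_bigr => j _; rewrite (bigD1 j) //= big1 ?addr0 => [|k /negPf].
  by rewrite mxE eqxx scale1r /ebasis -!colE.
by rewrite mxE eq_sym => ->; rewrite scale0r.
Qed.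

End BilinearSums.

Lemma orthonormal_basis_inv G U : orthonormal_basis G U -> U *m U^T = invmx G.
Proof.
move=> hU; symmetry; apply: invmx_eq; apply: mulmx1C.
by rewrite -mulmxA; apply: mulmx1C.
Qed.

Lemma orthonormal_basis_mulmx f G U : f \in unitmx -> orthonormal_basis G U ->
  orthonormal_basis (f^T *m G *m f) (invmx f *m U).
Proof.
move=> f_unit; have fT_unit : f^T \in unitmx by rewrite unitmx_tr.
by rewrite /orthonormal_basis trmx_mul trmx_inv !mulmxA (mulmxKV fT_unit) (mulmxK f_unit).
Qed.

End InnerProducts.

Section MetricLieAlgebra.
Variable R : realType.
Notation vec := 'cV[R]_3.
Notation e := (ebasis R).
Variable br : vec -> vec -> vec.
Hypothesis br_bilinear : is_bilinear br.
Let brDl := bilinDl br_bilinear.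
Let brZl := bilinZl br_bilinear.
Let brDr := bilinDr br_bilinear.
Let brZr := bilinZr br_bilinear.
Implicit Types (G f U D : 'M[R]_3) (x y z X Y Z : vec) (c k : R).

Definition koszul G X Y Z : R :=
  (ip G (br Z X) Y + ip G X (br Z Y) + ip G (br X Y) Z) / 2.

Lemma nablaE G X Y : nabla br G X Y = invmx G *m \col_k koszul G X Y (e k).
Proof. by []. Qed.

Ltac koszul_lin := rewrite /koszul ?brDl ?brZl ?brDr ?brZr
  ?ipDl ?ipZl ?ipDr ?ipZr; ring.

Lemma koszulDl G X1 X2 Y Z : koszul G (X1 + X2) Y Z = koszul G X1 Y Z + koszul G X2 Y Z.
Proof. koszul_lin. Qed.
Lemma koszulZl G c X Y Z : koszul G (c *: X) Y Z = c * koszul G X Y Z.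
Proof. koszul_lin. Qed.
Lemma koszulDm G X Y1 Y2 Z : koszul G X (Y1 + Y2) Z = koszul G X Y1 Z + koszul G X Y2 Z.
Proof. koszul_lin. Qed.
Lemma koszulZm G c X Y Z : koszul G X (c *: Y) Z = c * koszul G X Y Z.
Proof. koszul_lin. Qed.
Lemma koszulDr G X Y Z1 Z2 : koszul G X Y (Z1 + Z2) = koszul G X Y Z1 + koszul G X Y Z2.
Proof. koszul_lin. Qed.
Lemma koszulZr G c X Y Z : koszul G X Y (c *: Z) = c * koszul G X Y Z.
Proof. koszul_lin. Qed.

Lemma nablaDl G X1 X2 Y : nabla br G (X1 + X2) Y = nabla br G X1 Y + nabla br G X2 Y.
Proof.
rewrite !nablaE -mulmxDr; congr (_ *m _); apply/matrixP => k j.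
by rewrite !mxE koszulDl.
Qed.
Lemma nablaZl G c X Y : nabla br G (c *: X) Y = c *: nabla br G X Y.
Proof.
rewrite !nablaE scalemxAr; congr (_ *m _); apply/matrixP => k j.
by rewrite !mxE koszulZl.
Qed.
Lemma nablaDr G X Y1 Y2 : nabla br G X (Y1 + Y2) = nabla br G X Y1 + nabla br G X Y2.
Proof.
rewrite !nablaE -mulmxDr; congr (_ *m _); apply/matrixP => k j.
by rewrite !mxE koszulDm.
Qed.
Lemma nablaZr G c X Y : nabla br G X (c *: Y) = c *: nabla br G X Y.
Proof.
rewrite !nablaE scalemxAr; congr (_ *m _); apply/matrixP => k j.
by rewrite !mxE koszulZm.
Qed.

Lemma nabla_vec3l G Y (x y z : R) :
  nabla br G (vec3 x y z) Y
  = x *: nabla br G (e 0) Y + y *: nabla br G (e 1) Y + z *: nabla br G (e 2) Y.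
Proof. by rewrite vec3_ebasis !nablaDl !nablaZl. Qed.

Lemma nabla_vec3r G X (x y z : R) :
  nabla br G X (vec3 x y z)
  = x *: nabla br G X (e 0) + y *: nabla br G X (e 1) + z *: nabla br G X (e 2).
Proof. by rewrite vec3_ebasis !nablaDr !nablaZr. Qed.

Lemma subrDD (V : zmodType) (a1 a2 b1 b2 c1 c2 : V) :
  a1 + a2 - (b1 + b2) - (c1 + c2) = (a1 - b1 - c1) + (a2 - b2 - c2).
Proof. by rewrite !opprD (addrACA a1 a2) (addrACA (a1 - b1)). Qed.

Ltac curv_lin := rewrite /curv ?brDl ?brZl ?brDr ?brZr
  ?nablaDl ?nablaZl ?nablaDr ?nablaZr; by rewrite ?subrDD -?scalerBr.

Lemma curvDl G X1 X2 Y Z : curv br G (X1 + X2) Y Z = curv br G X1 Y Z + curv br G X2 Y Z.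
Proof. curv_lin. Qed.
Lemma curvZl G c X Y Z : curv br G (c *: X) Y Z = c *: curv br G X Y Z.
Proof. curv_lin. Qed.
Lemma curvDm G X Y1 Y2 Z : curv br G X (Y1 + Y2) Z = curv br G X Y1 Z + curv br G X Y2 Z.
Proof. curv_lin. Qed.
Lemma curvZm G c X Y Z : curv br G X (c *: Y) Z = c *: curv br G X Y Z.
Proof. curv_lin. Qed.
Lemma curvDr G X Y Z1 Z2 : curv br G X Y (Z1 + Z2) = curv br G X Y Z1 + curv br G X Y Z2.
Proof. curv_lin. Qed.
Lemma curvZr G c X Y Z : curv br G X Y (c *: Z) = c *: curv br G X Y Z.
Proof. curv_lin. Qed.

Lemma curv_ebasis G i j l : curv br G (e i) (e j) (e l) =
    nabla br G (e j) (e l) 0 0 *: nabla br G (e i) (e 0)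
  + nabla br G (e j) (e l) 1 0 *: nabla br G (e i) (e 1)
  + nabla br G (e j) (e l) 2 0 *: nabla br G (e i) (e 2)
  - (nabla br G (e i) (e l) 0 0 *: nabla br G (e j) (e 0)
     + nabla br G (e i) (e l) 1 0 *: nabla br G (e j) (e 1)
     + nabla br G (e i) (e l) 2 0 *: nabla br G (e j) (e 2))
  - (br (e i) (e j) 0 0 *: nabla br G (e 0) (e l)
     + br (e i) (e j) 1 0 *: nabla br G (e 1) (e l)
     + br (e i) (e j) 2 0 *: nabla br G (e 2) (e l)).
Proof.
rewrite /curv {1}[nabla br G (e j) (e l)]vec3_eta {1}[nabla br G (e i) (e l)]vec3_eta.
by rewrite {1}[br (e i) (e j)]vec3_eta !nabla_vec3r nabla_vec3l.
Qed.

Definition ricci G X : vec :=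
  \sum_j \sum_k invmx G j k *: curv br G X (e j) (e k).

Lemma curv_bilinear G X : is_bilinear (curv br G X).
Proof. by split=> *; rewrite ?curvDm ?curvZm ?curvDr ?curvZr. Qed.

Lemma ricci_wrtE G U X : orthonormal_basis G U -> ricci_wrt br G U X = ricci G X.
Proof.
move=> hU; rewrite /ricci_wrt /ricci (bilinear_sum_frame (curv_bilinear G X)).
by rewrite (orthonormal_basis_inv hU).
Qed.

Lemma ricciD G X1 X2 : ricci G (X1 + X2) = ricci G X1 + ricci G X2.
Proof.
rewrite /ricci -big_split; apply: eq_bigr => j _; rewrite -big_split.
by apply: eq_bigr => k _; rewrite curvDl scalerDr.
Qed.

Lemma ricciZ G c X : ricci G (c *: X) = c *: ricci G X.
Proof.
rewrite /ricci scaler_sumr; apply: eq_bigr => j _; rewrite scaler_sumr.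
by apply: eq_bigr => k _; rewrite curvZl !scalerA mulrC.
Qed.

Lemma ricci3 G X : ricci G X =
    invmx G 0 0 *: curv br G X (e 0) (e 0) + invmx G 0 1 *: curv br G X (e 0) (e 1)
  + invmx G 0 2 *: curv br G X (e 0) (e 2) + invmx G 1 0 *: curv br G X (e 1) (e 0)
  + invmx G 1 1 *: curv br G X (e 1) (e 1) + invmx G 1 2 *: curv br G X (e 1) (e 2)
  + invmx G 2 0 *: curv br G X (e 2) (e 0) + invmx G 2 1 *: curv br G X (e 2) (e 1)
  + invmx G 2 2 *: curv br G X (e 2) (e 2).
Proof. by rewrite /ricci; move: (invmx G) (curv br G X) => M C; rewrite !sum3 !addrA. Qed.

Lemma ricci_mulmx G A : (forall i, ricci G (e i) = A *m e i) -> forall X, ricci G X = A *m X.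
Proof.
move=> hA X; have ricci0 : ricci G 0 = 0 by rewrite -(scale0r (0 : vec)) ricciZ !scale0r.
rewrite [X]vec_ebasis (big_morph _ (ricciD G) ricci0) mulmx_sumr.
by apply: eq_bigr => i _; rewrite ricciZ hA scalemxAr.
Qed.

Lemma automorphism_mul f g :
  automorphism br f -> automorphism br g -> automorphism br (f *m g).
Proof.
case=> uf hf [ug hg]; split; first by rewrite unitmx_mul uf ug.
by move=> x y; rewrite -mulmxA hg hf !mulmxA.
Qed.

Lemma automorphism_inv f : automorphism br f -> automorphism br (invmx f).
Proof.
case=> uf hf; split; first by rewrite unitmx_inv.
by move=> x y; rewrite -{1}(mulKVmx uf x) -{1}(mulKVmx uf y) -hf mulKmx.
Qed.

Lemma derivation0 : derivation br 0.
Proof.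
have br0l z : br 0 z = 0 by rewrite -(scale0r (0 : vec)) brZl !scale0r.
have br0r z : br z 0 = 0 by rewrite -(scale0r (0 : vec)) brZr !scale0r.
by move=> x y; rewrite !mul0mx br0l br0r addr0.
Qed.

Lemma derivationZ k D : derivation br D -> derivation br (k *: D).
Proof. by move=> hD x y; rewrite -!scalemxAl hD scalerDr brZl brZr. Qed.

Lemma derivation_conj f D : automorphism br f -> derivation br D ->
  derivation br (invmx f *m D *m f).
Proof.
move=> hf hD x y; have [uf _] := hf; have [_ hfi] := automorphism_inv hf.
case: hf => _ hf'.
by rewrite -!mulmxA hf' hD mulmxDr !hfi !(mulKmx uf).
Qed.

Section Automorphisms.
Variable f : 'M[R]_3.
Hypothesis f_aut : automorphism br f.

Let f_unit : f \in unitmx. Proof. by case: f_aut. Qed.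

Lemma koszul_aut G X Y Z :
  koszul (f^T *m G *m f) X Y Z = koszul G (f *m X) (f *m Y) (f *m Z).
Proof. by case: f_aut => _ hf; rewrite /koszul !ip_mulmx !hf. Qed.

Lemma koszul_mulmx_ebasis G X Y i :
  koszul G X Y (f *m e i) = \sum_l f l i * koszul G X Y (e l).
Proof.
have koszul0r : koszul G X Y 0 = 0 by rewrite -(scale0r (0 : vec)) koszulZr mul0r.
rewrite mulmx_ebasis (big_morph _ (koszulDr G X Y) koszul0r).
by apply: eq_bigr => l _; rewrite koszulZr.
Qed.

Lemma nabla_aut G X Y : G \in unitmx ->
  nabla br (f^T *m G *m f) X Y = invmx f *m nabla br G (f *m X) (f *m Y).
Proof.
move=> G_unit; have fT_unit : f^T \in unitmx by rewrite unitmx_tr.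
rewrite !nablaE.
have -> : \col_i koszul (f^T *m G *m f) X Y (e i)
    = f^T *m \col_i koszul G (f *m X) (f *m Y) (e i).
  apply/matrixP => i j; rewrite (ord1 j) !mxE koszul_aut koszul_mulmx_ebasis.
  by apply: eq_bigr => l _; rewrite !mxE.
rewrite invmxM ?unitmx_mul ?fT_unit ?G_unit // invmxM //.
by rewrite -!mulmxA (mulKmx fT_unit).
Qed.

Lemma curv_aut G X Y Z : G \in unitmx ->
  curv br (f^T *m G *m f) X Y Z = invmx f *m curv br G (f *m X) (f *m Y) (f *m Z).
Proof.
move=> G_unit; rewrite /curv !nabla_aut // !(mulKVmx f_unit).
by case: f_aut => _ ->; rewrite !mulmxBr.
Qed.

Lemma ricci_aut G X : G \in unitmx ->
  ricci (f^T *m G *m f) X = invmx f *m ricci G (f *m X).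
Proof.
move=> G_unit; pose C Y Z := invmx f *m curv br G (f *m X) (f *m Y) (f *m Z).
have invE : invmx (f^T *m G *m f) = invmx f *m invmx G *m (invmx f)^T.
  by rewrite !invmxM ?unitmx_mul ?unitmx_tr ?f_unit ?G_unit // trmx_inv mulmxA.
rewrite /ricci invE.
transitivity (\sum_j \sum_l (invmx f *m invmx G *m (invmx f)^T) j l *: C (e j) (e l)).
  by apply: eq_bigr => j _; apply: eq_bigr => l _; rewrite curv_aut.
have C_bilinear : is_bilinear C.
  split=> *; rewrite /C.
  - by rewrite [f *m (_ + _)]mulmxDr curvDm mulmxDr.
  - by rewrite -[f *m (_ *: _)]scalemxAr curvZm -scalemxAr.
  - by rewrite [f *m (_ + _)]mulmxDr curvDr mulmxDr.
  - by rewrite -[f *m (_ *: _)]scalemxAr curvZr -scalemxAr.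
rewrite (bilinear_sum_conj C_bilinear).
rewrite mulmx_sumr; apply: eq_bigr => j _.
rewrite mulmx_sumr; apply: eq_bigr => l _.
by rewrite /C !(mulKVmx f_unit) scalemxAr.
Qed.

End Automorphisms.

Lemma koszul_scale k G X Y Z : koszul (k *: G) X Y Z = k * koszul G X Y Z.
Proof. rewrite /koszul !ip_scale; ring. Qed.

Lemma nabla_scale k G X Y : k != 0 -> G \in unitmx ->
  nabla br (k *: G) X Y = nabla br G X Y.
Proof.
move=> k0 G_unit; rewrite !nablaE invmxZ ?unitmxZ ?unitfE //.
have -> : \col_i koszul (k *: G) X Y (e i) = k *: \col_i koszul G X Y (e i).
  by apply/matrixP => i j; rewrite !mxE koszul_scale.
by rewrite -scalemxAl -scalemxAr scalerA mulVf // scale1r.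
Qed.

Lemma ricci_scale k G X : k != 0 -> G \in unitmx ->
  ricci (k *: G) X = k^-1 *: ricci G X.
Proof.
move=> k0 G_unit; rewrite /ricci invmxZ ?unitmxZ ?unitfE // scaler_sumr.
apply: eq_bigr => j _; rewrite scaler_sumr; apply: eq_bigr => l _.
by rewrite /curv !nabla_scale // mxE scalerA.
Qed.

Definition cI_plus_derivation (T : vec -> vec) : Prop :=
  exists c D, derivation br D /\ forall X, T X = c *: X + D *m X.

Lemma cI_plus_derivation_ricci_aut f G : automorphism br f -> G \in unitmx ->
  cI_plus_derivation (ricci (f^T *m G *m f)) <-> cI_plus_derivation (ricci G).
Proof.
move=> hf G_unit; have [f_unit _] := hf.
split=> -[c [D [hD hric]]].
- exists c, (f *m D *m invmx f); split.
    by have := derivation_conj (automorphism_inv hf) hD; rewrite invmxK.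
  move=> Y; rewrite -[Y in LHS](mulKVmx f_unit).
  rewrite -[ricci G _](mulKVmx f_unit) -ricci_aut // hric.
  by rewrite mulmxDr -scalemxAr (mulKVmx f_unit) !mulmxA.
- exists c, (invmx f *m D *m f); split; first exact: derivation_conj.
  by move=> X; rewrite ricci_aut // hric mulmxDr -scalemxAr (mulKmx f_unit) !mulmxA.
Qed.

Lemma cI_plus_derivation_ricci_scale k G : k != 0 -> G \in unitmx ->
  cI_plus_derivation (ricci (k *: G)) <-> cI_plus_derivation (ricci G).
Proof.
move=> k0 G_unit; split=> -[c [D [hD hric]]].
- exists (k * c), (k *: D); split; first exact: derivationZ.
  move=> X; rewrite -[ricci G X](scalerKV k0) -ricci_scale // hric.
  by rewrite scalerDr scalerA -scalemxAl.
- exists (k^-1 * c), (k^-1 *: D); split; first exact: derivationZ.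
  by move=> X; rewrite ricci_scale // hric scalerDr scalerA -scalemxAl.
Qed.

Lemma solvsoliton_ricci G U : orthonormal_basis G U ->
  solvsoliton br G -> cI_plus_derivation (ricci G).
Proof.
move=> hU [c [D [hD hric]]]; exists c, D; split => // X.
by rewrite -(ricci_wrtE X hU) hric.
Qed.

Lemma ricci_solvsoliton G : cI_plus_derivation (ricci G) -> solvsoliton br G.
Proof.
move=> [c [D [hD hric]]]; exists c, D; split => // U hU X.
by rewrite ricci_wrtE.
Qed.

Lemma ricci_einstein G c : (forall X, ricci G X = c *: X) -> einstein br G.
Proof. by move=> hric; exists c => U hU X; rewrite ricci_wrtE. Qed.

Lemma iso_up_to_scaling_mulmx k f G : 0 < k -> automorphism br f ->
  iso_up_to_scaling br (f^T *m (k *: G) *m f) G.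
Proof.
by move=> k_gt0 hf; exists k, f; do 2!split=> //; move=> x y; rewrite ip_mulmx ip_scale.
Qed.

End MetricLieAlgebra.

Section Rprime3a.
Variable R : realType.
Variable a : R.
Notation vec := 'cV[R]_3.
Notation e := (ebasis R).
Notation B := (br_r3a a).
Implicit Types (x y z X Y : vec) (c : R).

Lemma br_r3aE x y : B x y =
  vec3 0 (a * (x 0 0 * y 1 0 - x 1 0 * y 0 0) + (x 0 0 * y 2 0 - x 2 0 * y 0 0))
         (- (x 0 0 * y 1 0 - x 1 0 * y 0 0) + a * (x 0 0 * y 2 0 - x 2 0 * y 0 0)).
Proof. by []. Qed.

Lemma br_r3a_vec3 (x y z x' y' z' : R) : B (vec3 x y z) (vec3 x' y' z') =
  vec3 0 (a * (x * y' - y * x') + (x * z' - z * x')) (- (x * y' - y * x') + a * (x * z' - z * x')).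
Proof. by rewrite br_r3aE !vec3E. Qed.

Lemma br_r3a_bilinear : is_bilinear B.
Proof. by split=> *; rewrite !br_r3aE ?vec3D ?vec3Z; apply: vec3_eq; rewrite ?mxE; ring. Qed.

#[local] Hint Resolve br_r3a_bilinear : core.

Lemma br_r3a_ebasis :
  (B (e 0) (e 0) = vec3 0 0 0) * (B (e 0) (e 1) = vec3 0 a (-1)) * (B (e 0) (e 2) = vec3 0 1 a) *
  (B (e 1) (e 0) = vec3 0 (- a) 1) * (B (e 1) (e 1) = vec3 0 0 0) * (B (e 1) (e 2) = vec3 0 0 0) *
  (B (e 2) (e 0) = vec3 0 (-1) (- a)) * (B (e 2) (e 1) = vec3 0 0 0) * (B (e 2) (e 2) = vec3 0 0 0).
Proof. by rewrite !ebasisE !br_r3a_vec3; do !split; apply: vec3_eq; ring. Qed.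

Lemma derivation_r3a D : derivation B D -> D 1 1 = D 2 2 /\ D 2 1 = - D 1 2.
Proof.
move=> hD; have h1 := hD (e 0) (e 1); have h2 := hD (e 0) (e 2).
rewrite [D]mat3_eta !ebasisE !mat3_mulv !br_r3aE !vec3E ?mat3_mulv !vec3D in h1 h2.
move: h1 h2 => /vec3_inj [[_ h11] h12] /vec3_inj [[_ h21] h22].
have D00 : D 0 0 = 0 by lra.
rewrite D00 in h11; split; lra.
Qed.

Definition shear (v1 v2 : R) : 'M[R]_3 := mat3 1 0 0 v1 1 0 v2 0 1.
Definition dilation (s : R) : 'M[R]_3 := mat3 1 0 0 0 s 0 0 0 s.

Lemma shear_automorphism v1 v2 : automorphism B (shear v1 v2).
Proof.
split.
  have [] := @mulmx1_unit _ _ (shear v1 v2) (shear (- v1) (- v2)) => //.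
  by rewrite mat3_mul mat3_1; congr mat3; ring.
move=> x y; rewrite [x]vec3_eta [y]vec3_eta !mat3_mulv !br_r3aE !vec3E ?mat3_mulv.
by apply: vec3_eq; ring.
Qed.

Lemma dilation_automorphism s : s != 0 -> automorphism B (dilation s).
Proof.
move=> s0; split.
  have [] := @mulmx1_unit _ _ (dilation s) (dilation s^-1) => //.
  by rewrite mat3_mul mat3_1; congr mat3; field.
move=> x y; rewrite [x]vec3_eta [y]vec3_eta !mat3_mulv !br_r3aE !vec3E ?mat3_mulv.
by apply: vec3_eq; ring.
Qed.

Definition block_metric (p q r : R) : 'M[R]_3 := mat3 1 0 0 0 p r 0 r q.

Lemma ip_block_metric (p q r x y z x' y' z' : R) :
  ip (block_metric p q r) (vec3 x y z) (vec3 x' y' z')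
  = x * x' + p * y * y' + r * (y * z' + z * y') + q * z * z'.
Proof. rewrite ip3 !vec3E !mxE /=; ring. Qed.

Lemma block_metric_dilation (s : R) :
  block_metric (s ^+ 2) (s ^+ 2) 0 = (dilation s)^T *m dilation s.
Proof. by rewrite mat3_tr mat3_mul; congr mat3; ring. Qed.

Lemma inner_product_normal_form G : inner_product G ->
  exists v1 v2 g p q r, [/\ 0 < g, 0 < p, 0 < p * q - r ^+ 2 &
    G = (shear v1 v2)^T *m (g *: block_metric p q r) *m shear v1 v2].
Proof.
case=> Gsym Gpos; have sym i j : G j i = G i j by rewrite -{1}Gsym mxE.
pose P := G 1 1; pose Q := G 2 2; pose S := G 1 2; pose D := P * Q - S ^+ 2.
have P_gt0 : 0 < P.
  by rewrite /P -ip_ebasis; apply: Gpos; rewrite ebasisE vec3_neq0 // oner_eq0 orbT.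
have D_gt0 : 0 < D.
  have := Gpos (vec3 0 (- S) P); rewrite vec3_neq0 ?(lt0r_neq0 P_gt0) ?orbT //.
  have -> : ip G (vec3 0 (- S) P) (vec3 0 (- S) P) = P * D.
    by rewrite ip3 !vec3E (sym 1 2) /D /S /P /Q; ring.
  by rewrite pmulr_rgt0 // => /(_ isT).
have D0 := lt0r_neq0 D_gt0.
(* [e0 - v1 e1 - v2 e2] is orthogonal to [e1] and [e2]; [g] is its squared length. *)
pose v1 := (Q * G 0 1 - S * G 0 2) / D; pose v2 := (P * G 0 2 - S * G 0 1) / D.
have hv1 : P * v1 + S * v2 = G 0 1 by rewrite /v1 /v2 /D; field.
have hv2 : S * v1 + Q * v2 = G 0 2 by rewrite /v1 /v2 /D; field.
pose g := G 0 0 - (v1 * G 0 1 + v2 * G 0 2).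
have g_gt0 : 0 < g.
  have := Gpos (vec3 1 (- v1) (- v2)); rewrite vec3_neq0 ?oner_eq0 //.
  have -> : ip G (vec3 1 (- v1) (- v2)) (vec3 1 (- v1) (- v2)) = g.
    by rewrite ip3 !vec3E (sym 0 1) (sym 0 2) (sym 1 2) -/P -/Q -/S /g -hv1 -hv2; ring.
  by move/(_ isT).
have g0 := lt0r_neq0 g_gt0.
exists v1, v2, g, (P / g), (Q / g), (S / g); split.
- exact: g_gt0.
- exact: divr_gt0.
- have -> : P / g * (Q / g) - (S / g) ^+ 2 = D / g ^+ 2 by rewrite /D; field.
  by rewrite divr_gt0 // exprn_gt0.
have -> : g *: block_metric (P / g) (Q / g) (S / g) = mat3 g 0 0 0 P S 0 S Q.
  by rewrite mat3Z; congr mat3; field.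
rewrite {1}[G]mat3_eta /shear mat3_tr !mat3_mul (sym 0 1) (sym 0 2) (sym 1 2) -/P -/Q -/S.
by congr mat3; rewrite /g -hv1 -hv2; ring.
Qed.

Lemma block_metric_frame g p q r : 0 < g -> 0 < p -> 0 < p * q - r ^+ 2 ->
  exists U, orthonormal_basis (g *: block_metric p q r) U.
Proof.
move=> /sqr_exists[s s0 ->] /sqr_exists[t t0 ->] /sqr_exists[d d0 dE].
have -> : q = (d ^+ 2 + r ^+ 2) / t ^+ 2 by rewrite -dE; field.
exists (mat3 s^-1 0 0 0 (s * t)^-1 (- r / (s * t * d)) 0 0 (t / (s * d))).
rewrite /orthonormal_basis /block_metric mat3_tr mat3Z !mat3_mul mat3_1.
by congr mat3; field; rewrite ?s0 ?t0 ?d0.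
Qed.

Section BlockMetric.
Variables p q r : R.
Hypothesis d0 : p * q - r ^+ 2 != 0.
Local Notation d := (p * q - r ^+ 2).
Local Notation h := ((p + q) / (2 * d)).
Local Notation nb := (nabla B (block_metric p q r)).

Lemma block_metric_inv :
  invmx (block_metric p q r) = mat3 1 0 0 0 (q / d) (- r / d) 0 (- r / d) (p / d).
Proof. by apply: invmx_eq; rewrite mat3_mul mat3_1; congr mat3; field. Qed.

Lemma nabla_block_metricE :
  (nb (e 0) (e 0) = vec3 0 0 0) * (nb (e 0) (e 1) = vec3 0 (h * r) (- (h * p))) *
  (nb (e 0) (e 2) = vec3 0 (h * q) (- (h * r))) *
  (nb (e 1) (e 0) = vec3 0 (h * r - a) (1 - h * p)) * (nb (e 1) (e 1) = vec3 (a * p - r) 0 0) *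
  (nb (e 1) (e 2) = vec3 (a * r + (p - q) / 2) 0 0) *
  (nb (e 2) (e 0) = vec3 0 (h * q - 1) (- (h * r) - a)) *
  (nb (e 2) (e 1) = vec3 (a * r + (p - q) / 2) 0 0) * (nb (e 2) (e 2) = vec3 (a * q + r) 0 0).
Proof.
rewrite !nablaE block_metric_inv !col3 !mat3_mulv /koszul !ebasisE !br_r3a_vec3 !ip_block_metric.
by do !split; apply: vec3_eq; field.
Qed.

(* For R e0 + n with n = span(e1, e2) an abelian ideal, e0 a unit vector orthogonal
   to n and A = ad e0 restricted to n: Ric e0 = - tr (S A)^2 e0 and
   Ric = [A, A^t] / 2 - tr A * S A on n, where A^t is the M-adjoint of A and
   S A = (A + A^t) / 2. *)
Definition block_ricci : 'M[R]_3 := mat3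
  (- (2 * a ^+ 2 + ((p - q) ^+ 2 + 4 * r ^+ 2) / (2 * d))) 0 0
  0 ((p ^+ 2 - q ^+ 2) / (2 * d) + a * r * (p + q) / d - 2 * a ^+ 2)
    (r * (p + q) / d - a + a * (q ^+ 2 + r ^+ 2) / d)
  0 (r * (p + q) / d + a - a * (p ^+ 2 + r ^+ 2) / d)
    ((q ^+ 2 - p ^+ 2) / (2 * d) - a * r * (p + q) / d - 2 * a ^+ 2).

Lemma ricci_block_metric X : ricci B (block_metric p q r) X = block_ricci *m X.
Proof.
apply: ricci_mulmx => // i; have nbE := nabla_block_metricE; have brE := br_r3a_ebasis.
(* Abstracting the connection and the bracket keeps the rewrites from unfolding them. *)
by case: (ord3_cases i) => ->;
  rewrite ricci3 block_metric_inv !mat3E !curv_ebasis //;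
  move: nb (br_r3a a) nbE brE => nb br nbE brE;
  rewrite !brE !nbE !vec3E !ebasisE mat3_mulv !(vec3Z, vec3B, vec3D);
  apply: vec3_eq; field.
Qed.

End BlockMetric.

Lemma soliton_equations_solve p q r : 0 < p -> 0 < q ->
  p ^+ 2 - q ^+ 2 + 2 * a * r * (p + q) = 0 ->
  2 * r * (p + q) - a * (p ^+ 2 - q ^+ 2) = 0 -> p = q /\ r = 0.
Proof.
move=> p_gt0 q_gt0 e1 e2.
have pq0 : p ^+ 2 - q ^+ 2 = 0.
  have : (p ^+ 2 - q ^+ 2) * (1 + a ^+ 2) = 0.
    transitivity ((p ^+ 2 - q ^+ 2 + 2 * a * r * (p + q))
                  - a * (2 * r * (p + q) - a * (p ^+ 2 - q ^+ 2))); first by ring.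
    by rewrite e1 e2 mulr0 subr0.
  by move/eqP; rewrite mulf_eq0 (gt_eqF (ltr_pwDl ltr01 (sqr_ge0 a))) orbF => /eqP.
have pDq0 : p + q != 0 by rewrite gt_eqF // addr_gt0.
split.
  have : (p - q) * (p + q) = 0 by rewrite -pq0; ring.
  by move/eqP; rewrite mulf_eq0 (negPf pDq0) orbF subr_eq0 => /eqP.
move: e2; rewrite pq0 mulr0 subr0 => /eqP; rewrite !mulf_eq0 pnatr_eq0 (negPf pDq0) orbF /=.
by move/eqP.
Qed.

Lemma block_metric_solvsoliton p q r : 0 < p -> 0 < p * q - r ^+ 2 ->
  cI_plus_derivation B (ricci B (block_metric p q r)) -> p = q /\ r = 0.
Proof.
move=> p_gt0 d_gt0 [c [D [hD hric]]]; have d0 := lt0r_neq0 d_gt0.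
have q_gt0 : 0 < q by nra.
have entry i j : block_ricci p q r i j = c * (i == j)%:R + D i j.
  have := congr1 (fun v : vec => v i 0) (hric (e j)).
  by rewrite ricci_block_metric // /ebasis -!colE !mxE eqxx andbT => <-.
have [D11 D21] := derivation_r3a hD.
apply: soliton_equations_solve => //.
- transitivity ((p * q - r ^+ 2) * (block_ricci p q r 1 1 - block_ricci p q r 2 2)).
    by rewrite !mat3E; field.
  by rewrite !entry D11 /= subrr mulr0.
- transitivity ((p * q - r ^+ 2) * (block_ricci p q r 2 1 + block_ricci p q r 1 2)).
    by rewrite !mat3E; field.
  by rewrite !entry D21 /= mulr0 !add0r addNr mulr0.
Qed.

Lemma ricci_one X : ricci B 1%:M X = (- (2 * a ^+ 2)) *: X.
Proof.
have d0 : 1 * 1 - 0 ^+ 2 != 0 :> R by rewrite mulr1 expr0n subr0 oner_eq0.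
have -> : 1%:M = block_metric 1 1 0 :> 'M[R]_3 by rewrite mat3_1.
rewrite ricci_block_metric //.
have -> : block_ricci 1 1 0 = (- (2 * a ^+ 2)) *: 1%:M.
  by rewrite mat3_1 mat3Z; congr mat3; field.
by rewrite -scalemxAl mul1mx.
Qed.

Lemma einstein_one : einstein B 1%:M.
Proof. exact: ricci_einstein ricci_one. Qed.

Lemma solvsoliton_iso_one G : inner_product G -> solvsoliton B G -> iso_up_to_scaling B G 1%:M.
Proof.
move=> /inner_product_normal_form [v1 [v2 [g [p [q [r [g_gt0 p_gt0 d_gt0 ->]]]]]]] hsol.
have F_aut := shear_automorphism v1 v2; have [F_unit _] := F_aut.
have [U hU] := block_metric_frame g_gt0 p_gt0 d_gt0.
have gB_unit : g *: block_metric p q r \in unitmx.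
  by have [+ _] := mulmx1_unit hU; rewrite unitmx_mul => /andP[].
have B_unit : block_metric p q r \in unitmx by rewrite -(unitmxZ _ (unitf_gt0 g_gt0)).
move: hsol => /(solvsoliton_ricci br_r3a_bilinear (orthonormal_basis_mulmx F_unit hU)).
move/(cI_plus_derivation_ricci_aut br_r3a_bilinear F_aut gB_unit).
move/(cI_plus_derivation_ricci_scale br_r3a_bilinear (lt0r_neq0 g_gt0) B_unit).
move/(block_metric_solvsoliton p_gt0 d_gt0) => -[<- ->].
have [s s0 ->] := sqr_exists p_gt0.
have -> : (shear v1 v2)^T *m (g *: block_metric (s ^+ 2) (s ^+ 2) 0) *m shear v1 v2
    = (dilation s *m shear v1 v2)^T *m (g *: 1%:M) *m (dilation s *m shear v1 v2).
  by rewrite block_metric_dilation trmx_mul -!scalemxAr -!scalemxAl mulmx1 !mulmxA.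
exact: iso_up_to_scaling_mulmx g_gt0 (automorphism_mul (dilation_automorphism s0) F_aut).
Qed.

Lemma iso_one_solvsoliton G : iso_up_to_scaling B G 1%:M -> solvsoliton B G.
Proof.
move=> [k [f [k_gt0 [f_aut hip]]]]; have [f_unit _] := f_aut.
have k0 := lt0r_neq0 k_gt0.
have -> : G = f^T *m (k *: 1%:M) *m f.
  by apply: ip_inj => x y; rewrite hip ip_mulmx ip_scale.
apply: (ricci_solvsoliton br_r3a_bilinear).
apply/(cI_plus_derivation_ricci_aut br_r3a_bilinear f_aut).
  by rewrite unitmxZ ?unitmx1 ?unitf_gt0.
apply/(cI_plus_derivation_ricci_scale br_r3a_bilinear k0 (unitmx1 _ _)).
exists (- (2 * a ^+ 2)), 0; split; first exact: derivation0.
by move=> X; rewrite ricci_one mul0mx addr0.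
Qed.

End Rprime3a.

Theorem proposition4p11 (R : realType) (a : R) (ha : 0 <= a) :
  (forall G : 'M[R]_3, inner_product G ->
     (solvsoliton (br_r3a a) G <-> iso_up_to_scaling (br_r3a a) G 1%:M))
  /\ einstein (br_r3a a) 1%:M.
Proof.
split; last exact: einstein_one.
by move=> G hG; split; [exact: solvsoliton_iso_one | exact: iso_one_solvsoliton].
Qed.
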